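(* Let $g(Z)\in \mathbb{F}_q[Z]$. Let $F\in \mathrm{TA}_n(\mathbb{F}_q[Z,g(Z)^{-1}])\cap \mathrm{GA}_n(\mathbb{F}_q[Z])$ be such that the affine part of $F$ is the identity. Assume that $F_c\in \mathrm{TA}_n(\mathbb{F}_q[c])$ for all $c\in\mathbb{F}_{q^m}$ and all $m$. Then for any $m\in \mathbb{N}^*$ there exist $G,\tilde{G} \in \mathrm{TA}_n(\mathbb{F}_q[Z])$ such that for $c\in \mathbb{F}_{q^m}$: (1) $G_{c}=I_n$ if $g(c)\neq 0$, (2) $G_{c}=F_{c}$ if $g(c)=0$, (3) $\tilde{G}_{c}=F_{c}$ if $g(c)\neq 0$.
   Context: For a ring $R$, $\mathrm{GA}_n(R)$ is the group of polynomial automorphisms of $R^n$ and $\mathrm{TA}_n(R)$ the tame subgroup generated by invertible affine maps and triangular (Jonquières) maps $(a_1X_1+f_1,\dots,a_nX_n+f_n)$, $a_i$ units of $R$, $f_i\in R[X_{i+1},\dots,X_n]$. For $F\in\mathrm{GA}_n(k[Z])$ and $c$ in an extension of $k$, $F_c$ denotes the specialization $Z=c$. $I_n$ is the identity map. *)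

From HB Require Import structures.
From mathcomp Require Import all_boot all_algebra all_field.
From mathcomp Require Import mpoly.
Set Implicit Arguments. Unset Strict Implicit. Unset Printing Implicit Defensive.
Import GRing.Theory.
Local Open Scope ring_scope.

Definition polymap (K : comNzRingType) (n : nat) := n.-tuple {mpoly K[n]}.

Definition idmap_poly (K : comNzRingType) (n : nat) : polymap K n :=
  [tuple 'X_i | i < n].

Definition pcomp (K : comNzRingType) (n : nat) (F G : polymap K n) : polymap K n :=
  [tuple comp_mpoly G (tnth F i) | i < n].

Definition coeffs_in (K : comNzRingType) (S : K -> Prop) (n : nat) (F : polymap K n) :=
  forall (i : 'I_n) (m : 'X_{1..n}), S ((tnth F i)@_m).

Definition is_GA (K : comNzRingType) (n : nat) (F : polymap K n) :=
  exists G : polymap K n, pcomp F G = idmap_poly K n /\ pcomp G F = idmap_poly K n.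

Definition affine_over (K : comNzRingType) (S : K -> Prop) (n : nat) (F : polymap K n) :=
  exists (A B : 'M[K]_n) (b : 'I_n -> K),
    [/\ (forall i j, S (A i j) /\ S (B i j)), (forall i, S (b i)),
        A *m B = 1%:M, B *m A = 1%:M &
        forall i, tnth F i = \sum_(j < n) (A i j)%:MP * 'X_j + (b i)%:MP].

(* Triangular (Jonquieres) maps over S:
   F_i = a_i X_i + f_i, a_i a unit of S, f_i in S[X_{i+1}, ..., X_n]. *)
Definition triangular_over (K : comNzRingType) (S : K -> Prop) (n : nat) (F : polymap K n) :=
  exists (a a' : 'I_n -> K) (f : 'I_n -> {mpoly K[n]}),
    [/\ (forall i, S (a i) /\ S (a' i) /\ a i * a' i = 1),
        (forall i (m : 'X_{1..n}), S ((f i)@_m)),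
        (forall i (m : 'X_{1..n}), m \in msupp (f i) ->
            forall j : 'I_n, (j <= i)%N -> m j = 0%N) &
        forall i, tnth F i = (a i)%:MP * 'X_i + f i].

Inductive tame_over (K : comNzRingType) (S : K -> Prop) (n : nat) : polymap K n -> Prop :=
| tame_affine F : affine_over S F -> tame_over S F
| tame_triangular F : triangular_over S F -> tame_over S F
| tame_comp F G : tame_over S F -> tame_over S G -> tame_over S (pcomp F G)
| tame_inv F G : tame_over S G -> coeffs_in S F ->
    pcomp F G = idmap_poly K n -> pcomp G F = idmap_poly K n -> tame_over S F.

Definition tame (K : comNzRingType) (n : nat) (F : polymap K n) :=
  tame_over (fun _ : K => True) F.

Definition affine_part_id (K : comNzRingType) (n : nat) (F : polymap K n) :=
  forall (i : 'I_n) (m : 'X_{1..n}), (mdeg m <= 1)%N ->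
    (tnth F i)@_m = ('X_i : {mpoly K[n]})@_m.

(* F_q[Z, g^{-1}] as the subring { p / g^k } of the fraction field F_q(Z). *)
Definition loc_pred (k : fieldType) (g : {poly k}) : {fraction {poly k}} -> Prop :=
  fun x => exists (p : {poly k}) (e : nat), x = tofrac p / (tofrac g) ^+ e.

(* A map over F_q[Z] viewed over F_q(Z) (hence over F_q[Z, g^{-1}]). *)
Definition to_frac_map (k : fieldType) (n : nat) (F : polymap {poly k} n)
  : polymap {fraction {poly k}} n :=
  [tuple map_mpoly (@tofrac _) (tnth F i) | i < n].

Definition evZ (k : fieldType) (L : fieldExtType k) (c : L) (p : {poly k}) : L :=
  (map_poly (in_alg L) p).[c].

Definition spec (k : fieldType) (L : fieldExtType k) (c : L) (n : nat)
  (F : polymap {poly k} n) : polymap L n :=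
  [tuple map_mpoly (evZ c) (tnth F i) | i < n].

Definition adj_pred (k : fieldType) (L : fieldExtType k) (c : L) : L -> Prop :=
  fun x => exists p : {poly k}, x = evZ c p.

From Pilot Require Import Defs.
From HB Require Import structures.
From mathcomp Require Import all_boot all_algebra all_field.
From mathcomp Require Import mpoly ring fingroup perm.
Set Implicit Arguments. Unset Strict Implicit. Unset Printing Implicit Defensive.
Import GRing.Theory.
Local Open Scope ring_scope.

(* Fix a finite extension L of k = F_q and c in L. The ring k[c] is a field,
   and over a field a tame map is W o D with D diagonal and W a product of
   elementary maps X_i |-> X_i + f, f free of X_i. As F has trivial affine
   part, the Jacobian determinant of F_c has constant term 1, so det D = 1 and
   F_c is itself a product of elementary maps. Each factor lifts to k[Z] by
   multiplying lifted coefficients by e = 1 - mu_c^(|L|-1), mu_c the minimal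
   polynomial of c over k: e(c) = 1, and e(c') = 0 unless c' is conjugate to c.
   This gives a tame map over k[Z] specializing to F at the conjugates of c and
   to the identity elsewhere; composing these lifts over the conjugacy classes
   where g vanishes (resp. over all classes) gives G (resp. G~). *)

Local Notation "F \oP G" := (Defs.pcomp F G) (at level 50).

Section Composition.
Variables (R : comNzRingType) (n : nat).
Implicit Types (F G H : polymap R n) (p : {mpoly R[n]}).
Local Notation Id := (idmap_poly R n).

Lemma tnth_idmap i : tnth Id i = 'X_i.
Proof. by rewrite tnth_mktuple. Qed.

Lemma tnth_pcomp F G i : tnth (F \oP G) i = tnth F i \mPo G.
Proof. by rewrite tnth_mktuple. Qed.

Lemma comp_mpolyX_tnth i G : 'X_i \mPo G = tnth G i.
Proof. by rewrite comp_mpolyXU -tnth_nth. Qed.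

Lemma comp_mpolyA p G H :
  (p \mPo G) \mPo H = p \mPo [tuple tnth G i \mPo H | i < n].
Proof.
rewrite (comp_mpolyE p G) (comp_mpolyE p) raddf_sum /=; apply: eq_bigr => m _.
rewrite comp_mpolyZ rmorph_prod /=; congr (_ *: _).
by apply: eq_bigr => i _; rewrite rmorphXn /= tnth_mktuple.
Qed.

Lemma pcompA F G H : (F \oP G) \oP H = F \oP (G \oP H).
Proof.
apply: eq_from_tnth => i; rewrite !tnth_pcomp comp_mpolyA.
by congr comp_mpoly; apply: eq_from_tnth => j; rewrite !tnth_mktuple.
Qed.

Lemma pcomp_idl F : Id \oP F = F.
Proof. by apply: eq_from_tnth => i; rewrite tnth_pcomp tnth_idmap comp_mpolyX_tnth. Qed.

Lemma pcomp_idr F : F \oP Id = F.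
Proof. by apply: eq_from_tnth => i; rewrite tnth_pcomp comp_mpoly_id. Qed.

Lemma pcomp_inv_uniq F G G' : F \oP G = Id -> G' \oP F = Id -> G = G'.
Proof. by move=> FG G'F; rewrite -[G]pcomp_idl -G'F pcompA FG pcomp_idr. Qed.

Lemma sum_delta_scaleX i (c : 'I_n -> R) :
  \sum_(j < n) ((i == j)%:R * c j) *: ('X_j : {mpoly R[n]}) = c i *: 'X_i.
Proof.
rewrite (bigD1 i) //= eqxx mul1r big1 ?addr0 // => j /negbTE nj.
by rewrite eq_sym nj mul0r scale0r.
Qed.

End Composition.

Definition map_pmap (R S : comNzRingType) (f : R -> S) n (F : polymap R n) :
  polymap S n := [tuple map_mpoly f (tnth F i) | i < n].

Lemma tnth_map_pmap (R S : comNzRingType) (f : R -> S) n (F : polymap R n) i :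
  tnth (map_pmap f F) i = map_mpoly f (tnth F i).
Proof. by rewrite tnth_mktuple. Qed.

Lemma mcoeff_map_mpoly_fun (R S : comNzRingType) n (f : R -> S)
    (p : {mpoly R[n]}) m :
  f 0 = 0 -> (map_mpoly f p)@_m = f p@_m.
Proof.
move=> f0; rewrite /map_mpoly /mmap raddf_sum /=.
rewrite (eq_bigr (fun m' => (f p@_m' * (m' == m)%:R))); last first.
  by move=> m' _; rewrite /= mmap1_id mcoeffCM mcoeffX.
have [pm|pm] := boolP (m \in msupp p).
  rewrite (bigD1_seq m) ?msupp_uniq //= eqxx mulr1 big1 ?addr0 //.
  by move=> m' /negbTE ->; rewrite mulr0.
rewrite big1_seq; last first.
  by move=> m' /andP[_ pm']; case: eqP pm' pm => [->->|] //; rewrite mulr0.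
by move: pm; rewrite mcoeff_msupp negbK => /eqP ->; rewrite f0.
Qed.

Section MapMorphism.
Variables (R S : comNzRingType) (f : {rmorphism R -> S}) (n : nat).

Lemma map_mpoly_comp (p : {mpoly R[n]}) (G : polymap R n) :
  map_mpoly f (p \mPo G) = map_mpoly f p \mPo map_pmap f G.
Proof.
elim/mpolyind: p => [|c m p _ _ IH]; first by rewrite !raddf0.
rewrite !raddfD /= IH; congr (_ + _).
rewrite comp_mpolyZ comp_mpolyX !map_mpolyZ map_mpolyX comp_mpolyZ comp_mpolyX.
rewrite rmorph_prod; congr (_ *: _); apply: eq_bigr => i _.
by rewrite rmorphXn /= tnth_map_pmap.
Qed.

Lemma map_pmap_pcomp (F G : polymap R n) :
  map_pmap f (F \oP G) = map_pmap f F \oP map_pmap f G.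
Proof.
apply: eq_from_tnth => i.
by rewrite !(tnth_map_pmap, tnth_pcomp) map_mpoly_comp.
Qed.

Lemma map_pmap_id : map_pmap f (idmap_poly R n) = idmap_poly S n.
Proof. by apply: eq_from_tnth => i; rewrite tnth_map_pmap !tnth_idmap map_mpolyX. Qed.

End MapMorphism.

Section ElementaryMaps.
Variables (R : comNzRingType) (n : nat).
Implicit Types (i j : 'I_n) (H : polymap R n) (f : {mpoly R[n]}) (d l : 'I_n -> R).
Local Notation Id := (idmap_poly R n).

Definition elem_map i f : polymap R n :=
  [tuple if j == i then 'X_j + f else 'X_j | j < n].

Definition diag_map d : polymap R n := [tuple d j *: 'X_j | j < n].

Definition shift_map (f : 'I_n -> {mpoly R[n]}) : polymap R n :=
  [tuple 'X_i + f i | i < n].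

Definition linform l : {mpoly R[n]} := \sum_(j < n) l j *: 'X_j.

Definition avoid i f := forall m, f@_m != 0 -> m i = 0%N.

Definition upper i f :=
  forall m, f@_m != 0 -> forall j : 'I_n, (j <= i)%N -> m j = 0%N.

Lemma tnth_elem_map i f j :
  tnth (elem_map i f) j = if j == i then 'X_j + f else 'X_j.
Proof. by rewrite tnth_mktuple. Qed.

Lemma tnth_diag_map d j : tnth (diag_map d) j = d j *: 'X_j.
Proof. by rewrite tnth_mktuple. Qed.

Lemma upper_avoid i f : upper i f -> avoid i f.
Proof. by move=> h m /h; apply. Qed.

Lemma avoidN i f : avoid i f -> avoid i (- f).
Proof. by move=> h m; rewrite mcoeffN oppr_eq0; apply: h. Qed.

Lemma upperN i f : upper i f -> upper i (- f).
Proof. by move=> h m; rewrite mcoeffN oppr_eq0; apply: h. Qed.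

Lemma avoid_linform i l : l i = 0 -> avoid i (linform l).
Proof.
move=> li m; rewrite /linform (big_morph _ (mcoeffD m) (mcoeff0 _ m)).
apply: contraNeq => mi; rewrite big1 // => j _.
rewrite mcoeffZ mcoeffX; have [e|] := eqVneq U_(j)%MM m; last by rewrite mulr0.
have [->|nji] := eqVneq j i; first by rewrite li mul0r.
by move: mi; rewrite -e mnm1E (negbTE nji).
Qed.

Lemma comp_mpoly_fixed f H :
  (forall m j, f@_m != 0 -> m j != 0%N -> tnth H j = 'X_j) -> f \mPo H = f.
Proof.
move=> hf; rewrite comp_mpolyE {3}[f]mpolyE; apply: eq_big_seq => m.
rewrite mcoeff_msupp => nz; congr (_ *: _); rewrite mpolyXE_id.
by apply: eq_bigr => j _; have [->|/(hf _ _ nz)->] := eqVneq (m j) 0%N.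
Qed.

Lemma comp_avoid i f H :
  avoid i f -> (forall j, j != i -> tnth H j = 'X_j) -> f \mPo H = f.
Proof.
move=> h hH; apply: comp_mpoly_fixed => m j nz mj; apply: hH.
by apply: contraNneq mj => ->; rewrite h.
Qed.

Lemma comp_upper i f H :
  upper i f -> (forall j : 'I_n, (i < j)%N -> tnth H j = 'X_j) -> f \mPo H = f.
Proof.
move=> h hH; apply: comp_mpoly_fixed => m j nz mj; apply: hH.
by rewrite ltnNge; apply: contra mj => le; rewrite (h _ nz _ le).
Qed.

Lemma comp_linform l H : linform l \mPo H = \sum_(j < n) l j *: tnth H j.
Proof.
rewrite /linform (big_morph _ (comp_mpolyD H) (comp_mpoly0 H)).
by apply: eq_bigr => j _; rewrite comp_mpolyZ comp_mpolyX_tnth.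
Qed.

Lemma comp_linform_fixed l H :
  (forall j, l j != 0 -> tnth H j = 'X_j) -> linform l \mPo H = linform l.
Proof.
move=> h; rewrite comp_linform /linform; apply: eq_bigr => j _.
by have [->|/h->] := eqVneq (l j) 0; rewrite ?scale0r.
Qed.

Lemma linformN l : - linform l = linform (fun j => - l j).
Proof. by rewrite /linform -sumrN; apply: eq_bigr => j _; rewrite scaleNr. Qed.

Lemma eq_linform l1 l2 : l1 =1 l2 -> linform l1 = linform l2.
Proof. by move=> h; apply: eq_bigr => j _; rewrite h. Qed.

Lemma linform0 : linform (fun=> 0) = 0.
Proof. by rewrite /linform big1 // => j _; rewrite scale0r. Qed.

Lemma linform_delta j t : linform (fun u => if u == j then t else 0) = t *: 'X_j.
Proof.
rewrite /linform (bigD1 j) //= eqxx big1 ?addr0 // => u /negbTE ->.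
by rewrite scale0r.
Qed.

Lemma elem_mapK i f : avoid i f -> elem_map i f \oP elem_map i (- f) = Id.
Proof.
move=> hf; apply: eq_from_tnth => j.
rewrite tnth_pcomp tnth_elem_map tnth_idmap; have [->|nji] := eqVneq j i.
  rewrite comp_mpolyD comp_mpolyX_tnth tnth_elem_map eqxx.
  rewrite (comp_avoid hf) ?addrNK // => l /negbTE hl.
  by rewrite tnth_elem_map hl.
by rewrite comp_mpolyX_tnth tnth_elem_map (negbTE nji).
Qed.

Lemma elem_mapKV i f : avoid i f -> elem_map i (- f) \oP elem_map i f = Id.
Proof. by move=> hf; rewrite -{2}[f]opprK; apply/elem_mapK/avoidN. Qed.

Lemma elem_map0 i : elem_map i 0 = Id.
Proof.
apply: eq_from_tnth => j; rewrite tnth_elem_map tnth_idmap addr0.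
by case: ifP.
Qed.

Lemma eq_diag_map d1 d2 : d1 =1 d2 -> diag_map d1 = diag_map d2.
Proof. by move=> h; apply: eq_from_tnth => j; rewrite !tnth_diag_map h. Qed.

Lemma diag_map1 : diag_map (fun=> 1) = Id.
Proof. by apply: eq_from_tnth => j; rewrite tnth_diag_map tnth_idmap scale1r. Qed.

Lemma diag_mapM d1 d2 :
  diag_map d1 \oP diag_map d2 = diag_map (fun j => d1 j * d2 j).
Proof.
apply: eq_from_tnth => j; rewrite tnth_pcomp !tnth_diag_map comp_mpolyZ.
by rewrite comp_mpolyX_tnth tnth_diag_map scalerA.
Qed.

Lemma mcoeff_comp_diag_map f d m :
  (f \mPo diag_map d)@_m = f@_m * \prod_(j < n) d j ^+ m j.
Proof.
elim/mpolyind: f => [|c m0 p _ _ IH]; first by rewrite raddf0 !mcoeff0 mul0r.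
rewrite raddfD /= !mcoeffD IH mulrDl; congr (_ + _).
rewrite comp_mpolyZ comp_mpolyX.
rewrite (eq_bigr (fun j => d j ^+ m0 j *: 'X_j ^+ m0 j)); last first.
  by move=> j _; rewrite tnth_diag_map exprZn.
rewrite scaler_prod -mpolyXE_id !mcoeffZ !mcoeffX.
by have [->|] := eqVneq m0 m; rewrite ?mulr1 // !mulr0 mul0r.
Qed.

Inductive elementary : polymap R n -> Prop :=
| elementary_id : elementary Id
| elementary_upper i f H :
    upper i f -> elementary H -> elementary (elem_map i f \oP H)
| elementary_linform i l H :
    l i = 0 -> elementary H -> elementary (elem_map i (linform l) \oP H).

Lemma elementary_comp F G : elementary F -> elementary G -> elementary (F \oP G).
Proof.
elim=> [|i f H hf _ IH|i l H hl _ IH] hG; first by rewrite pcomp_idl.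
  by rewrite pcompA; apply: elementary_upper => //; apply: IH.
by rewrite pcompA; apply: elementary_linform => //; apply: IH.
Qed.

Lemma elementary_elem_upper i f : upper i f -> elementary (elem_map i f).
Proof.
by move=> h; rewrite -[elem_map i f]pcomp_idr; apply: elementary_upper => //; constructor.
Qed.

Lemma elementary_elem_linform i l : l i = 0 -> elementary (elem_map i (linform l)).
Proof.
by move=> h; rewrite -[elem_map _ _]pcomp_idr; apply: elementary_linform => //; constructor.
Qed.

Lemma elementary_inv F :
  elementary F -> exists G, [/\ elementary G, F \oP G = Id & G \oP F = Id].
Proof.
have step i f H : avoid i f -> elementary (elem_map i (- f)) ->
    (exists G, [/\ elementary G, H \oP G = Id & G \oP H = Id]) ->
    exists G, [/\ elementary G, (elem_map i f \oP H) \oP G = Id &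
                                G \oP (elem_map i f \oP H) = Id].
  move=> hf hE [G [eG HG GH]]; exists (G \oP elem_map i (- f)); split.
  - exact: elementary_comp.
  - by rewrite pcompA -(pcompA H) HG pcomp_idl elem_mapK.
  - by rewrite pcompA -(pcompA (elem_map i (- f))) elem_mapKV // pcomp_idl.
elim=> [|i f H hf _|i l H hl _].
- by exists Id; rewrite pcomp_idl; split=> //; constructor.
- by apply: step; [apply: upper_avoid | apply/elementary_elem_upper/upperN].
- apply: step; first exact: avoid_linform.
  by rewrite linformN; apply: elementary_elem_linform; rewrite hl oppr0.
Qed.

(* Adding the f_i one at a time, in increasing r-order: when f_i is added the
   coordinates it depends on have not been modified yet. *)
Lemma elementary_shift_map (r : 'I_n -> nat) (f : 'I_n -> {mpoly R[n]}) :
  injective r -> (forall i, elementary (elem_map i (f i))) ->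
  (forall i H, (forall j, (r i < r j)%N -> tnth H j = 'X_j) -> f i \mPo H = f i) ->
  elementary (shift_map f).
Proof.
move=> r_inj hE hfix.
pose M k := shift_map (fun i => if (r i < k)%N then f i else 0).
have MS k : elementary (M k) -> elementary (M k.+1).
  move=> hk; have [i /eqP ri_k | none] := pickP (fun i => r i == k).
    suff -> : M k.+1 = elem_map i (f i) \oP M k by apply: elementary_comp.
    apply: eq_from_tnth => j; rewrite /M tnth_pcomp tnth_elem_map !tnth_mktuple.
    have [->|nji] := eqVneq j i.
      rewrite ri_k ltnSn comp_mpolyD comp_mpolyX_tnth tnth_mktuple ri_k ltnn.
      rewrite addr0 hfix // => j' hj'.
      by rewrite tnth_mktuple -ri_k ltnNge (ltnW hj') addr0.
    rewrite comp_mpolyX_tnth tnth_mktuple ltnS leq_eqVlt.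
    have [rjk|//] := eqVneq (r j) k.
    by move: nji; rewrite -(inj_eq r_inj) rjk ri_k eqxx.
  suff -> : M k.+1 = M k by [].
  by apply: eq_from_tnth => j; rewrite !tnth_mktuple ltnS leq_eqVlt none.
have M0 : M 0%N = Id by apply: eq_from_tnth => i; rewrite !tnth_mktuple addr0.
have Mall k : elementary (M k).
  by elim: k => [|k IH]; [rewrite M0; constructor | apply: MS].
suff -> : shift_map f = M (\sum_(i < n) (r i).+1)%N by [].
apply: eq_from_tnth => i; rewrite !tnth_mktuple.
by rewrite (bigD1 i) //= ltnS leq_addr.
Qed.

Lemma elementary_shift_upper (f : 'I_n -> {mpoly R[n]}) :
  (forall i, upper i (f i)) -> elementary (shift_map f).
Proof.
move=> hu; apply: (@elementary_shift_map (fun i => val i)) => //.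
- exact: val_inj.
- by move=> i; apply: elementary_elem_upper.
- by move=> i H; apply: comp_upper.
Qed.

End ElementaryMaps.

Section ElemDiag.
Variables (K : fieldType) (n : nat).
Implicit Types (i j : 'I_n) (F G H W : polymap K n) (f : {mpoly K[n]}) (d : 'I_n -> K).
Local Notation Id := (idmap_poly K n).
Local Notation diag_inv d := (diag_map (fun j => (d j)^-1)).

Lemma diag_mapV d : (forall j, d j != 0) -> diag_map d \oP diag_inv d = Id.
Proof. by move=> nz; rewrite diag_mapM -diag_map1; apply: eq_diag_map => j; rewrite mulfV. Qed.

Lemma diag_mapVK d : (forall j, d j != 0) -> diag_inv d \oP diag_map d = Id.
Proof. by move=> nz; rewrite diag_mapM -diag_map1; apply: eq_diag_map => j; rewrite mulVf. Qed.

Lemma conj_diag_elem_map d i f : (forall j, d j != 0) ->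
  (diag_map d \oP elem_map i f) \oP diag_inv d =
  elem_map i (d i *: (f \mPo diag_inv d)).
Proof.
move=> nz; apply: eq_from_tnth => j; rewrite !tnth_pcomp tnth_diag_map tnth_elem_map.
rewrite comp_mpolyZ comp_mpolyX_tnth tnth_elem_map comp_mpolyZ.
have [->|_] := eqVneq j i.
  by rewrite comp_mpolyD comp_mpolyX_tnth tnth_diag_map scalerDr scalerA mulfV ?scale1r.
by rewrite comp_mpolyX_tnth tnth_diag_map scalerA mulfV ?scale1r.
Qed.

Lemma upper_scale_comp_diag i f (c : K) d :
  upper i f -> upper i (c *: (f \mPo diag_map d)).
Proof.
move=> h m; rewrite mcoeffZ mcoeff_comp_diag_map => nz; apply: h.
by apply: contraNneq nz => ->; rewrite mul0r mulr0.
Qed.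

Lemma scale_comp_diag_linform (c : K) (l : 'I_n -> K) d :
  c *: (linform l \mPo diag_map d) = linform (fun j => c * l j * d j).
Proof.
rewrite comp_linform /linform scaler_sumr; apply: eq_bigr => j _.
by rewrite tnth_diag_map !scalerA mulrA.
Qed.

Lemma elementary_conj_diag d F : (forall j, d j != 0) -> elementary F ->
  elementary ((diag_map d \oP F) \oP diag_inv d).
Proof.
move=> nz; have split_conj A B : (diag_map d \oP (A \oP B)) \oP diag_inv d =
    ((diag_map d \oP A) \oP diag_inv d) \oP ((diag_map d \oP B) \oP diag_inv d).
  by rewrite !pcompA -(pcompA (diag_inv d)) (diag_mapVK nz) pcomp_idl.
elim=> [|i f H hf _ IH|i l H hl _ IH].
- by rewrite pcomp_idr (diag_mapV nz); constructor.
- rewrite split_conj conj_diag_elem_map //; apply: elementary_comp => //.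
  exact/elementary_elem_upper/upper_scale_comp_diag.
- rewrite split_conj conj_diag_elem_map // scale_comp_diag_linform.
  by apply: elementary_comp => //; apply: elementary_elem_linform; rewrite hl mulr0 mul0r.
Qed.

Definition elem_diag H :=
  exists W d, [/\ elementary W, forall j, d j != 0 & H = W \oP diag_map d].

Lemma elem_diag_elementary W : elementary W -> elem_diag W.
Proof.
move=> h; exists W, (fun=> 1); split=> //; last by rewrite diag_map1 pcomp_idr.
by move=> j; apply: oner_neq0.
Qed.

Lemma elem_diag_diag d : (forall j, d j != 0) -> elem_diag (diag_map d).
Proof. by move=> h; exists Id, d; split=> //; [constructor | rewrite pcomp_idl]. Qed.

(* Diagonal maps normalise the elementary group, so W1 D1 W2 D2 = W1 (D1 W2 D1^-1) (D1 D2). *)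
Lemma elem_diag_comp F G : elem_diag F -> elem_diag G -> elem_diag (F \oP G).
Proof.
move=> [W1 [d1 [w1 n1 ->]]] [W2 [d2 [w2 n2 ->]]].
exists (W1 \oP ((diag_map d1 \oP W2) \oP diag_inv d1)), (fun j => d1 j * d2 j).
split; first by apply: elementary_comp => //; apply: elementary_conj_diag.
  by move=> j; rewrite mulf_neq0.
by rewrite -diag_mapM !pcompA -(pcompA (diag_inv d1)) (diag_mapVK n1) pcomp_idl.
Qed.

Lemma elem_diag_inv F G : elem_diag F -> F \oP G = Id -> G \oP F = Id -> elem_diag G.
Proof.
move=> [W [d [w nz eF]]] FG _; have [W' [w' WW' W'W]] := elementary_inv w.
have -> : G = diag_inv d \oP W'.
  apply: (pcomp_inv_uniq (F := F)) => //.
  by rewrite eF !pcompA -(pcompA W') W'W pcomp_idl (diag_mapVK nz).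
apply: elem_diag_comp; last exact: elem_diag_elementary.
by apply: elem_diag_diag => j; rewrite invr_eq0.
Qed.

End ElemDiag.

Section PlaneMaps.
Variables (K : fieldType) (n : nat).
Implicit Types (i j : 'I_n) (p q r s t : K).

Definition plane_map i j p q r s : polymap K n :=
  [tuple if k == i then p *: 'X_i + q *: 'X_j
         else if k == j then r *: 'X_i + s *: 'X_j else 'X_k | k < n].

Lemma tnth_plane_map i j p q r s k : tnth (plane_map i j p q r s) k =
  if k == i then p *: 'X_i + q *: 'X_j
  else if k == j then r *: 'X_i + s *: 'X_j else 'X_k.
Proof. by rewrite tnth_mktuple. Qed.

Lemma plane_mapM i j p q r s p' q' r' s' : i != j ->
  plane_map i j p q r s \oP plane_map i j p' q' r' s' =
  plane_map i j (p * p' + q * r') (p * q' + q * s') (r * p' + s * r') (r * q' + s * s').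
Proof.
move=> nij; apply: eq_from_tnth => k; rewrite tnth_pcomp !tnth_plane_map.
have ci : 'X_i \mPo plane_map i j p' q' r' s' = p' *: 'X_i + q' *: 'X_j.
  by rewrite comp_mpolyX_tnth tnth_plane_map eqxx.
have cj : 'X_j \mPo plane_map i j p' q' r' s' = r' *: 'X_i + s' *: 'X_j.
  by rewrite comp_mpolyX_tnth tnth_plane_map eq_sym (negbTE nij) eqxx.
have [_|nki] := eqVneq k i.
  by rewrite comp_mpolyD !comp_mpolyZ ci cj !scalerDr !scalerA !scalerDl addrACA.
have [_|nkj] := eqVneq k j.
  by rewrite comp_mpolyD !comp_mpolyZ ci cj !scalerDr !scalerA !scalerDl addrACA.
by rewrite comp_mpolyX_tnth tnth_plane_map (negbTE nki) (negbTE nkj).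
Qed.

Lemma plane_map_diag i j t s : i != j ->
  plane_map i j t 0 0 s = diag_map (fun k => if k == i then t else if k == j then s else 1).
Proof.
move=> nij; apply: eq_from_tnth => k; rewrite tnth_plane_map tnth_diag_map.
have [->|nki] := eqVneq k i; first by rewrite scale0r addr0.
by have [->|_] := eqVneq k j; rewrite ?scale0r ?add0r ?scale1r.
Qed.

Lemma elementary_shear_ij i j t : i != j -> elementary (plane_map i j 1 t 0 1).
Proof.
move=> nij; have -> :
    plane_map i j 1 t 0 1 = elem_map i (linform (fun u => if u == j then t else 0)).
  apply: eq_from_tnth => k; rewrite tnth_plane_map tnth_elem_map linform_delta.
  have [->|nki] := eqVneq k i; first by rewrite scale1r.
  by have [->|//] := eqVneq k j; rewrite scale0r scale1r add0r.
by apply: elementary_elem_linform; rewrite (negbTE nij).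
Qed.

Lemma elementary_shear_ji i j t : i != j -> elementary (plane_map i j 1 0 t 1).
Proof.
move=> nij; have -> :
    plane_map i j 1 0 t 1 = elem_map j (linform (fun u => if u == i then t else 0)).
  apply: eq_from_tnth => k; rewrite tnth_plane_map tnth_elem_map linform_delta.
  have [->|nki] := eqVneq k i; first by rewrite (negbTE nij) scale1r scale0r addr0.
  by have [->|//] := eqVneq k j; rewrite scale1r addrC.
by apply: elementary_elem_linform; rewrite eq_sym (negbTE nij).
Qed.

(* The Whitehead relation w(t) = e_ij(t) e_ji(-1/t) e_ij(t). *)
Lemma elementary_plane_w i j t : i != j -> t != 0 ->
  elementary (plane_map i j 0 t (- t^-1) 0).
Proof.
move=> nij nt; have -> : plane_map i j 0 t (- t^-1) 0 =
    (plane_map i j 1 t 0 1 \oP plane_map i j 1 0 (- t^-1) 1) \oP plane_map i j 1 t 0 1.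
  by rewrite !plane_mapM //; congr plane_map; field; rewrite ?oppr_eq0 ?oner_neq0.
by do 2?apply: elementary_comp; [apply: elementary_shear_ij|
  apply: elementary_shear_ji|apply: elementary_shear_ij].
Qed.

Lemma elementary_plane_diag i j t : i != j -> t != 0 ->
  elementary (plane_map i j t 0 0 t^-1).
Proof.
move=> nij nt; have -> : plane_map i j t 0 0 t^-1 =
    plane_map i j 0 t (- t^-1) 0 \oP plane_map i j 0 (-1) (- (-1)^-1) 0.
  by rewrite !plane_mapM //; congr plane_map; field; rewrite ?oppr_eq0 ?oner_neq0.
by apply: elementary_comp; apply: elementary_plane_w; rewrite // oppr_eq0 oner_neq0.
Qed.

Lemma elem_diag_swap i j : i != j -> elem_diag (plane_map i j 0 1 1 0).
Proof.
move=> nij; have -> : plane_map i j 0 1 1 0 =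
    plane_map i j 0 (-1) (- (-1)^-1) 0 \oP plane_map i j 1 0 0 (-1).
  by rewrite !plane_mapM //; congr plane_map; field; rewrite ?oppr_eq0 ?oner_neq0.
apply: elem_diag_comp.
  by apply/elem_diag_elementary/elementary_plane_w; rewrite // oppr_eq0 oner_neq0.
rewrite plane_map_diag //; apply: elem_diag_diag => k.
by case: ifP => _; [|case: ifP => _]; rewrite ?oppr_eq0 oner_neq0.
Qed.

End PlaneMaps.

Section LinearMaps.
Variable K : fieldType.

Definition lin_map n (A : 'M[K]_n) : polymap K n :=
  [tuple \sum_(j < n) A i j *: 'X_j | i < n].

Lemma tnth_lin_map n (A : 'M[K]_n) i : tnth (lin_map A) i = \sum_(j < n) A i j *: 'X_j.
Proof. by rewrite tnth_mktuple. Qed.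

Lemma lin_mapM n (A B : 'M[K]_n) : lin_map A \oP lin_map B = lin_map (A *m B).
Proof.
apply: eq_from_tnth => i; rewrite tnth_pcomp !tnth_lin_map.
rewrite (big_morph _ (comp_mpolyD (lin_map B)) (comp_mpoly0 (lin_map B))).
rewrite (eq_bigr (fun j => \sum_(k < n) (A i j * B j k) *: 'X_k)); last first.
  move=> j _; rewrite comp_mpolyZ comp_mpolyX_tnth tnth_lin_map scaler_sumr.
  by apply: eq_bigr => k _; rewrite scalerA.
by rewrite exchange_big /=; apply: eq_bigr => k _; rewrite mxE scaler_suml.
Qed.

Lemma lin_map_perm n (s : 'S_n) : lin_map (perm_mx s : 'M[K]_n) = [tuple 'X_(s i) | i < n].
Proof.
apply: eq_from_tnth => i; rewrite tnth_lin_map tnth_mktuple.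
rewrite (eq_bigr (fun j => ((s i == j)%:R * 1) *: 'X_j)).
  by rewrite sum_delta_scaleX scale1r.
by move=> j _; rewrite !mxE mulr1.
Qed.

Lemma lin_map1 n : lin_map (1%:M : 'M[K]_n) = idmap_poly K n.
Proof.
rewrite -perm_mx1 lin_map_perm; apply: eq_from_tnth => i.
by rewrite tnth_mktuple tnth_idmap perm1.
Qed.

Lemma elem_diag_perm n (s : 'S_n) : elem_diag (lin_map (perm_mx s : 'M[K]_n)).
Proof.
have [ts -> hts] := prod_tpermP s; elim: ts hts => [|t ts IH] /=.
  by rewrite big_nil perm_mx1 lin_map1 => _; apply/elem_diag_elementary; constructor.
move=> /andP[ht hts]; rewrite big_cons perm_mxM -lin_mapM.
apply: elem_diag_comp; last exact: IH.
have -> : lin_map (perm_mx (tperm t.1 t.2)) = plane_map t.1 t.2 0 1 1 0.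
  rewrite lin_map_perm; apply: eq_from_tnth => k; rewrite tnth_mktuple tnth_plane_map.
  have [->|nk1] := eqVneq k t.1; first by rewrite tpermL scale0r scale1r add0r.
  have [->|nk2] := eqVneq k t.2; first by rewrite tpermR scale0r scale1r addr0.
  by rewrite tpermD // eq_sym.
exact: elem_diag_swap.
Qed.

Lemma elementary_lin_unitriangular n (A : 'M[K]_n) (r : 'I_n -> nat) :
  injective r -> (forall i, A i i = 1) ->
  (forall i j, (r j < r i)%N -> A i j = 0) -> elementary (lin_map A).
Proof.
move=> r_inj A1 A0.
have -> : lin_map A = shift_map (fun i => linform (fun j => if j == i then 0 else A i j)).
  apply: eq_from_tnth => i; rewrite tnth_lin_map tnth_mktuple /linform.
  rewrite (bigD1 i) //= (bigD1 i (P := predT)) //= eqxx A1 scale1r scale0r add0r.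
  by congr (_ + _); apply: eq_bigr => j /negbTE ->.
apply: (elementary_shift_map r_inj) => [i|i H hH].
  by apply: elementary_elem_linform; rewrite eqxx.
apply: comp_linform_fixed => j; have [_|nji] := eqVneq j i; first by rewrite eqxx.
move=> nz; apply: hH; rewrite ltn_neqAle (inj_eq r_inj) eq_sym nji /=.
by rewrite leqNgt; apply: contra nz => /A0->.
Qed.

Lemma elem_diag_lin_upper n (U : 'M[K]_n) : (forall j, U j j != 0) ->
  (forall i j : 'I_n, (j < i)%N -> U i j = 0) -> elem_diag (lin_map U).
Proof.
move=> nz U0.
have -> : lin_map U = lin_map (\matrix_(i, j) (U i j / U j j)) \oP diag_map (fun j => U j j).
  apply: eq_from_tnth => i; rewrite tnth_pcomp !tnth_lin_map.
  rewrite (big_morph _ (comp_mpolyD _) (comp_mpoly0 _)); apply: eq_bigr => j _.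
  by rewrite comp_mpolyZ comp_mpolyX_tnth tnth_diag_map scalerA mxE divfK.
apply: elem_diag_comp; last exact: elem_diag_diag.
apply/elem_diag_elementary/(@elementary_lin_unitriangular _ _ val val_inj) => [i|i j ji].
  by rewrite mxE divff.
by rewrite mxE U0 // mul0r.
Qed.

Lemma elem_diag_lin n (A B : 'M[K]_n) : A *m B = 1%:M -> elem_diag (lin_map A).
Proof.
case: n A B => [|m] A B AB.
  have -> : lin_map A = idmap_poly K 0 by apply: eq_from_tnth => -[].
  by apply: elem_diag_elementary; constructor.
have := cormen_lup_correct A; have := cormen_lup_perm A.
have := @cormen_lup_lower _ _ A; have := @cormen_lup_upper _ _ A.
have := cormen_lup_detL A.
case: (cormen_lup A) => [[P L] U] /= detL U0 L1 /is_perm_mxP [s ->] PA.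
have eA : A = perm_mx s^-1 *m (L *m U).
  by rewrite -!mulmxE in PA; rewrite -PA mulmxA -perm_mxM mulVg perm_mx1 mul1mx.
have detA : \det A != 0.
  apply/eqP => d0; move: (congr1 determinant AB).
  by rewrite det_mulmx d0 mul0r det1 => /eqP; rewrite eq_sym oner_eq0.
have detU : \det U = \prod_i U i i.
  rewrite -det_tr det_trig; first by apply: eq_bigr => i _; rewrite mxE.
  by apply/is_trig_mxP => a b ab; rewrite mxE U0.
have nzU j : U j j != 0.
  apply: contra detA => /eqP Uj; rewrite eA !det_mulmx detL detU.
  by rewrite (bigD1 j) //= Uj mul0r !mulr0.
rewrite eA -!lin_mapM; apply: elem_diag_comp; first exact: elem_diag_perm.
apply: elem_diag_comp; last exact: elem_diag_lin_upper.
apply/elem_diag_elementary/(@elementary_lin_unitriangular _ _ (fun i => val (rev_ord i))).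
- by move=> i j /val_inj /rev_ord_inj.
- by move=> i; rewrite L1 ?eqxx.
- move=> i j; rewrite /= ltn_sub2lE // ltnS => ij.
  by rewrite L1 ?(ltnW ij) // -val_eqE /= ltn_eqF.
Qed.

Lemma upper_const n (i : 'I_n) (c : K) : upper i c%:MP.
Proof.
move=> m; rewrite mcoeffC; have [-> _ j _|] := eqVneq m 0%MM; first by rewrite mnm0E.
by rewrite mulr0 eqxx.
Qed.

Lemma elem_diag_affine n (F : polymap K n) : affine_over (fun=> True) F -> elem_diag F.
Proof.
move=> [A [B [b [_ _ AB _ hF]]]].
have -> : F = shift_map (fun i => (b i)%:MP) \oP lin_map A.
  apply: eq_from_tnth => i; rewrite tnth_pcomp tnth_mktuple hF comp_mpolyD comp_mpolyC.
  rewrite comp_mpolyX_tnth tnth_lin_map; congr (_ + _).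
  by apply: eq_bigr => j _; rewrite mul_mpolyC.
apply: elem_diag_comp; last exact: elem_diag_lin AB.
by apply/elem_diag_elementary/elementary_shift_upper => i; apply: upper_const.
Qed.

Lemma elem_diag_triangular n (F : polymap K n) :
  triangular_over (fun=> True) F -> elem_diag F.
Proof.
move=> [a [a' [f [ha _ hs hF]]]].
have aa' i : a i * a' i = 1 by have [_ []] := ha i.
have nza i : a i != 0 by apply: contra_eq_neq (aa' i) => ->; rewrite mul0r eq_sym oner_neq0.
have -> : F = diag_map a \oP shift_map (fun i => a' i *: f i).
  apply: eq_from_tnth => i; rewrite tnth_pcomp tnth_diag_map hF comp_mpolyZ.
  rewrite comp_mpolyX_tnth tnth_mktuple scalerDr scalerA aa' scale1r.
  by rewrite mul_mpolyC.
apply: elem_diag_comp; first exact: elem_diag_diag.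
apply/elem_diag_elementary/elementary_shift_upper => i m; rewrite mcoeffZ => nz.
by apply: (hs i); rewrite mcoeff_msupp; apply: contraNneq nz => ->; rewrite mulr0.
Qed.

Lemma tame_elem_diag n (F : polymap K n) : tame F -> elem_diag F.
Proof.
elim=> {F} [F|F|F G _ hF _ hG|F G _ hG _ FG GF].
- exact: elem_diag_affine.
- exact: elem_diag_triangular.
- exact: elem_diag_comp.
- exact: (elem_diag_inv hG GF FG).
Qed.

End LinearMaps.

Section Jacobian.
Variables (R : comNzRingType) (n : nat).
Implicit Types (i j : 'I_n) (p q : {mpoly R[n]}) (F G : polymap R n).

Lemma mderivX_eq i j : ('X_i : {mpoly R[n]})^`M(j) = ((i == j)%:R)%:MP.
Proof.
rewrite mderivX mnm1E; have [->|_] := eqVneq i j; last by rewrite scale0r.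
have -> : (U_(j) - U_(j))%MM = 0%MM by apply/mnmP => l; rewrite mnmBE subnn mnm0E.
by rewrite mpolyX0 scale1r.
Qed.

Lemma mderiv_comp p G j :
  (p \mPo G)^`M(j) = \sum_(k < n) (p^`M(k) \mPo G) * (tnth G k)^`M(j).
Proof.
pose chain p := (p \mPo G)^`M(j) = \sum_(k < n) (p^`M(k) \mPo G) * (tnth G k)^`M(j).
have chain1 : chain 1.
  rewrite /chain comp_mpoly1 -mpolyC1 mderivC big1 // => k _.
  by rewrite mderivC comp_mpolyC mul0r.
have chainX i : chain 'X_i.
  rewrite /chain comp_mpolyX_tnth (bigD1 i) //= mderivX_eq eqxx comp_mpolyC mul1r.
  rewrite big1 ?addr0 // => k /negbTE nk.
  by rewrite mderivX_eq eq_sym nk comp_mpolyC mul0r.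
have chainD q r : chain q -> chain r -> chain (q + r).
  rewrite /chain comp_mpolyD mderivD => -> ->; rewrite -big_split /=.
  by apply: eq_bigr => k _; rewrite mderivD comp_mpolyD mulrDl.
have chainM q r : chain q -> chain r -> chain (q * r).
  rewrite /chain rmorphM /= mderivM => -> ->.
  rewrite mulr_suml mulr_sumr -big_split /=; apply: eq_bigr => k _.
  by rewrite mderivM comp_mpolyD !rmorphM /=; ring.
have chainZ c q : chain q -> chain (c *: q).
  rewrite /chain comp_mpolyZ mderivZ => ->; rewrite scaler_sumr.
  by apply: eq_bigr => k _; rewrite mderivZ comp_mpolyZ scalerAl.
suff chain_all q : chain q by apply: chain_all.
elim/mpolyind: q => [|c m q _ _ IH].
  by rewrite /chain comp_mpoly0 mderiv0 big1 // => k _; rewrite mderiv0 comp_mpoly0 mul0r.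
apply: chainD IH; apply: chainZ; rewrite mpolyXE_id; apply: (big_ind chain) => // i _.
by elim: (m i) => [|e IHe]; rewrite ?expr0 // exprS; apply: chainM.
Qed.

Definition jacobian F : 'M[{mpoly R[n]}]_n := \matrix_(i, j) (tnth F i)^`M(j).

Lemma det_jacobianM F G :
  \det (jacobian (F \oP G)) = (\det (jacobian F) \mPo G) * \det (jacobian G).
Proof.
have -> : jacobian (F \oP G) = map_mx (comp_mpoly G) (jacobian F) *m jacobian G.
  apply/matrixP => i j; rewrite !mxE tnth_pcomp mderiv_comp.
  by apply: eq_bigr => k _; rewrite !mxE.
by rewrite det_mulmx det_map_mx.
Qed.

Lemma jacobian_id : jacobian (idmap_poly R n) = 1%:M.
Proof. by apply/matrixP => i j; rewrite !mxE tnth_idmap mderivX_eq rmorph_nat. Qed.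

Lemma mderiv_avoid i p : avoid i p -> p^`M(i) = 0.
Proof.
move=> h; apply/mpolyP => m; rewrite mcoeff_mderiv mcoeff0.
have [->|/h] := eqVneq p@_(m + U_(i)) 0; first by rewrite mul0rn.
by rewrite mnmDE mnm1E eqxx addn1.
Qed.

(* Expanding along column i: the minor is the identity matrix. *)
Lemma det_jacobian_elem_map i f : avoid i f -> \det (jacobian (elem_map i f)) = 1.
Proof.
move=> h; rewrite (expand_det_col _ i) (bigD1 i) //= big1 ?addr0; last first.
  move=> k nki; rewrite !mxE tnth_elem_map (negbTE nki) mderivX_eq (negbTE nki).
  by rewrite mul0r.
rewrite !mxE tnth_elem_map eqxx mderivD (mderiv_avoid h) addr0 mderivX_eq eqxx.
rewrite mul1r /cofactor addnn -mul2n exprM sqrrN !expr1n mul1r.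
have -> : row' i (col' i (jacobian (elem_map i f))) = 1%:M.
  apply/matrixP => a b; rewrite !mxE tnth_elem_map eq_sym (negbTE (neq_lift i a)).
  by rewrite mderivX_eq (inj_eq (@lift_inj _ i)) rmorph_nat.
by rewrite det1.
Qed.

Lemma det_jacobian_diag_map (d : 'I_n -> R) :
  \det (jacobian (diag_map d)) = (\prod_j d j)%:MP.
Proof.
have -> : jacobian (diag_map d) = diag_mx (\row_j (d j)%:MP).
  apply/matrixP => i j; rewrite !mxE tnth_diag_map mderivZ mderivX_eq.
  have [->|_] := eqVneq i j; last by rewrite mulr0n scaler0.
  by rewrite mulr1n -mul_mpolyC mulr1.
by rewrite det_diag rmorph_prod; apply: eq_bigr => j _; rewrite mxE.
Qed.

Lemma mcoeff0_det_jacobian F :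
  (\det (jacobian F))@_0 = \det (\matrix_(i, j) (tnth F i)@_U_(j)).
Proof.
transitivity (\det (map_mx (mcoeff 0%MM) (jacobian F))); first by rewrite det_map_mx.
congr determinant; apply/matrixP => i j.
by rewrite !mxE mcoeff_mderiv add0m mnm0E.
Qed.

End Jacobian.

Section ElementaryCharacterization.
Variables (K : fieldType) (n : nat).
Local Notation Id := (idmap_poly K n).

Lemma det_jacobian_elementary (W : polymap K n) :
  elementary W -> \det (jacobian W) = 1.
Proof.
elim=> [|i f H hf _ IH|i l H hl _ IH]; first by rewrite jacobian_id det1.
- by rewrite det_jacobianM det_jacobian_elem_map ?IH ?comp_mpoly1 ?mulr1 //; apply: upper_avoid.
- by rewrite det_jacobianM det_jacobian_elem_map ?IH ?comp_mpoly1 ?mulr1 //; apply: avoid_linform.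
Qed.

(* diag(d_0, ..., d_{n-1}) with prod d = 1 is a product of the maps
   diag(1, .., t, .., t^-1, ..) collecting everything in coordinate 0. *)
Lemma elementary_diag_prod1 (d : 'I_n -> K) :
  (forall j, d j != 0) -> \prod_j d j = 1 -> elementary (diag_map d).
Proof.
case: n d => [|m] d nz d1.
  have -> : diag_map d = idmap_poly K 0 by apply: eq_from_tnth => -[].
  by constructor.
pose e (s : seq 'I_m.+1) k :=
  if k == ord0 then \prod_(j <- s) (d j)^-1 else if k \in s then d k else 1.
have elem_e s : uniq s -> ord0 \notin s -> elementary (diag_map (e s)).
  elim: s => [|j s IH] /=.
    move=> _ _; rewrite (@eq_diag_map _ _ _ (fun=> 1)) ?diag_map1; first by constructor.
    by move=> k; rewrite /e big_nil in_nil; case: ifP.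
  move=> /andP[js us]; rewrite in_cons negb_or => /andP[nj0 s0].
  have -> : diag_map (e (j :: s)) =
      diag_map (e s) \oP plane_map ord0 j (d j)^-1 0 0 (d j)^-1^-1.
    rewrite plane_map_diag // diag_mapM; apply: eq_diag_map => k.
    rewrite /e big_cons in_cons.
    have [_|nk0] := eqVneq k ord0; first by rewrite mulrC.
    have [->|nkj] /= := eqVneq k j; first by rewrite (negbTE js) mul1r invrK.
    by rewrite mulr1.
  apply: elementary_comp; first exact: IH.
  by apply: elementary_plane_diag; rewrite // invr_eq0.
pose s := [seq j <- enum 'I_m.+1 | j != ord0].
have -> : diag_map d = diag_map (e s).
  apply: eq_diag_map => k; rewrite /e.
  have [->|nk] := eqVneq k ord0; last by rewrite mem_filter nk mem_enum.
  have hp : d ord0 * \prod_(j | j != ord0) d j = 1 by move: d1; rewrite (bigD1 ord0).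
  have nzp : \prod_(j | j != ord0) d j != 0.
    by apply: contra_eq_neq hp => ->; rewrite mulr0 eq_sym oner_neq0.
  rewrite prodfV big_filter big_enum_cond /=.
  by apply: (mulIf nzp); rewrite hp mulVf.
by apply: elem_e; [rewrite filter_uniq // enum_uniq | rewrite mem_filter eqxx].
Qed.

(* Comparing constant terms of the Jacobian determinant forces det D = 1. *)
Lemma elem_diag_elementary_linear_id (F : polymap K n) : elem_diag F ->
  (forall i j, (tnth F i)@_U_(j) = (i == j)%:R) -> elementary F.
Proof.
move=> [W [d [w nz ->]]] linF.
have detJ : \det (jacobian (W \oP diag_map d)) = (\prod_j d j)%:MP.
  by rewrite det_jacobianM det_jacobian_elementary // comp_mpoly1 mul1r det_jacobian_diag_map.
have detJ0 : (\det (jacobian (W \oP diag_map d)))@_0 = 1.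
  rewrite mcoeff0_det_jacobian -[RHS](det1 _ n); congr determinant.
  by apply/matrixP => i j; rewrite !mxE linF.
have d1 : \prod_j d j = 1 by move: detJ0; rewrite detJ mcoeffC eqxx mulr1.
by apply: elementary_comp => //; apply: elementary_diag_prod1.
Qed.

End ElementaryCharacterization.

Section TameGenerators.
Variables (R : comNzRingType) (n : nat).
Implicit Types (i : 'I_n) (f : {mpoly R[n]}) (l : 'I_n -> R).

Lemma tame_id : tame (idmap_poly R n).
Proof.
apply: tame_affine; exists 1%:M, 1%:M, (fun=> 0); split=> //; rewrite ?mulmx1 //.
move=> i; rewrite tnth_idmap mpolyC0 addr0.
rewrite (eq_bigr (fun j => ((i == j)%:R * 1) *: 'X_j)); first by rewrite sum_delta_scaleX scale1r.
by move=> j _; rewrite mxE mulr1 mul_mpolyC.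
Qed.

Lemma tame_elem_upper i f : upper i f -> tame (elem_map i f).
Proof.
move=> hu; apply: tame_triangular.
exists (fun=> 1), (fun=> 1), (fun j => if j == i then f else 0); split=> //.
- by move=> j; rewrite mulr1.
- move=> j m; have [->|_] := eqVneq j i; last by rewrite msupp0.
  by rewrite mcoeff_msupp => nz j0 le; apply: hu.
- by move=> j; rewrite tnth_elem_map mul1r; have [->|_] := eqVneq j i; rewrite ?addr0.
Qed.

(* X_i + l(X) with l_i = 0 is the linear map 1 + N, where N = e_i l^T squares to 0. *)
Lemma tame_elem_linform i l : l i = 0 -> tame (elem_map i (linform l)).
Proof.
move=> li; pose N : 'M[R]_n := \matrix_(a, b) ((a == i)%:R * l b).
have NN : N *m N = 0.
  apply/matrixP => a b; rewrite !mxE (bigD1 i) //= !mxE eqxx li mul1r mulr0 mul0r add0r.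
  by rewrite big1 // => t /negbTE nt; rewrite !mxE nt !mul0r mulr0.
apply: tame_affine; exists (1%:M + N), (1%:M - N), (fun=> 0); split=> //.
- by rewrite mulmxDl !mulmxBr !mul1mx mulmx1 NN subr0 subrK.
- by rewrite mulmxDr mulmx1 mulmxDl mulNmx mul1mx NN oppr0 addr0 subrK.
move=> k; rewrite mpolyC0 addr0 tnth_elem_map.
rewrite (eq_bigr (fun j => ((k == j)%:R * 1) *: 'X_j + ((k == i)%:R * l j) *: 'X_j)); last first.
  by move=> j _; rewrite !mxE mulr1 mul_mpolyC scalerDl.
rewrite big_split /= sum_delta_scaleX scale1r /linform.
have [->|_] := eqVneq k i; first by congr (_ + _); apply: eq_bigr => j _; rewrite mul1r.
by rewrite big1 ?addr0 // => j _; rewrite mul0r scale0r.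
Qed.

Lemma map_elem_map (S : comNzRingType) (phi : {rmorphism R -> S}) i f :
  map_pmap phi (elem_map i f) = elem_map i (map_mpoly phi f).
Proof.
apply: eq_from_tnth => j; rewrite tnth_map_pmap !tnth_elem_map.
by case: ifP => _; rewrite ?rmorphD /= map_mpolyX.
Qed.

Lemma map_linform (S : comNzRingType) (phi : {rmorphism R -> S}) l :
  map_mpoly phi (linform l) = linform (fun j => phi (l j)).
Proof.
rewrite /linform (raddf_sum (map_mpoly phi)); apply: eq_bigr => j _ /=.
by rewrite map_mpolyZ map_mpolyX.
Qed.

End TameGenerators.

Section Specialization.
Variables (k : fieldType) (L : fieldExtType k) (c : L).

Lemma evZ_is_zmod_morphism : zmod_morphism (@evZ k L c).
Proof. by move=> p q; rewrite /evZ rmorphB hornerD hornerN. Qed.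

HB.instance Definition _ :=
  GRing.isZmodMorphism.Build {poly k} L (@evZ k L c) evZ_is_zmod_morphism.

Lemma evZ_is_monoid_morphism : monoid_morphism (@evZ k L c).
Proof. by split=> [|p q]; rewrite /evZ ?rmorph1 ?hornerC // rmorphM hornerM. Qed.

HB.instance Definition _ :=
  GRing.isMonoidMorphism.Build {poly k} L (@evZ k L c) evZ_is_monoid_morphism.

Lemma spec_pcomp n (F G : polymap {poly k} n) :
  spec c (F \oP G) = spec c F \oP spec c G.
Proof. exact: (map_pmap_pcomp (evZ c)). Qed.

Lemma spec_id n : spec c (idmap_poly {poly k} n) = idmap_poly L n.
Proof. exact: (map_pmap_id (evZ c)). Qed.

End Specialization.

Section LiftFromSubfield.
Variables (k : fieldType) (L : fieldExtType k) (c : L) (n : nat).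
Local Notation KK := (subvs_of <<1; c>>%AS).

Lemma lift_coef_subproof (y : KK) : exists p : {poly k}, evZ c p == vsval y.
Proof.
have /Fadjoin_polyP [q /polyOver1P [p ->] ->] := subvsP y.
by exists p.
Qed.

Lemma adj_pred_subfield x : adj_pred c x -> x \in <<1; c>>%VS.
Proof. by move=> [p ->]; apply/mempx_Fadjoin/polyOver1P; exists p. Qed.

(* With e(c) = 1, a coefficient y in k(c) = k[c] is lifted to p e, where
   p is any polynomial with p(c) = y; the lift vanishes wherever e does.
   Sending 0 to 0 keeps supports, hence upper-triangularity. *)
Variable e : {poly k}.
Hypothesis ec : evZ c e = 1.

Definition lift_coef (y : KK) : {poly k} :=
  if y == 0 then 0 else xchoose (lift_coef_subproof y) * e.

Lemma lift_coef0 : lift_coef 0 = 0.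
Proof. by rewrite /lift_coef eqxx. Qed.

Lemma evZ_lift_coef y : evZ c (lift_coef y) = vsval y.
Proof.
rewrite /lift_coef; case: eqP => [->|_]; first by rewrite !rmorph0.
by rewrite rmorphM /= ec mulr1; apply/eqP/(xchooseP (lift_coef_subproof y)).
Qed.

Lemma evZ_lift_coef0 (c' : L) y : evZ c' e = 0 -> evZ c' (lift_coef y) = 0.
Proof.
move=> ec'; rewrite /lift_coef; case: eqP => _; first by rewrite rmorph0.
by rewrite rmorphM /= ec' mulr0.
Qed.

Lemma map_lift_coef (p : {mpoly KK[n]}) :
  map_mpoly (evZ c) (map_mpoly lift_coef p) = map_mpoly vsval p.
Proof.
apply/mpolyP => m; rewrite mcoeff_map_mpoly /= mcoeff_map_mpoly_fun ?lift_coef0 //.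
by rewrite evZ_lift_coef mcoeff_map_mpoly.
Qed.

Lemma map_lift_coef0 (c' : L) (p : {mpoly KK[n]}) : evZ c' e = 0 ->
  map_mpoly (evZ c') (map_mpoly lift_coef p) = 0.
Proof.
move=> ec'; apply/mpolyP => m.
by rewrite mcoeff_map_mpoly /= mcoeff_map_mpoly_fun ?lift_coef0 // evZ_lift_coef0 // mcoeff0.
Qed.

Definition liftable (W : polymap KK n) := exists G : polymap {poly k} n,
  [/\ tame G, spec c G = map_pmap vsval W &
      forall c' : L, evZ c' e = 0 -> spec c' G = idmap_poly L n].

Lemma liftable_comp A B : liftable A -> liftable B -> liftable (A \oP B).
Proof.
move=> [G [tG sG eG]] [H [tH sH eH]]; exists (G \oP H); split.
- exact: tame_comp.
- by rewrite spec_pcomp sG sH map_pmap_pcomp.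
- by move=> c' h; rewrite spec_pcomp eG // eH // pcomp_idr.
Qed.

Lemma liftable_elem_upper i (f : {mpoly KK[n]}) : upper i f -> liftable (elem_map i f).
Proof.
move=> hu; exists (elem_map i (map_mpoly lift_coef f)); split.
- apply: tame_elem_upper => m; rewrite mcoeff_map_mpoly_fun ?lift_coef0 // => nz.
  by apply: hu; apply: contraNneq nz => ->; rewrite lift_coef0.
- by rewrite /spec -/(map_pmap _ _) !map_elem_map map_lift_coef.
- by move=> c' h; rewrite /spec -/(map_pmap _ _) map_elem_map map_lift_coef0 // elem_map0.
Qed.

Lemma liftable_elem_linform i (l : 'I_n -> KK) : l i = 0 ->
  liftable (elem_map i (linform l)).
Proof.
move=> li; exists (elem_map i (linform (fun j => lift_coef (l j)))); split.
- by apply: tame_elem_linform; rewrite li lift_coef0.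
- rewrite /spec -/(map_pmap _ _) !map_elem_map !map_linform.
  by congr elem_map; apply: eq_linform => j; apply: evZ_lift_coef.
- move=> c' h; rewrite /spec -/(map_pmap _ _) map_elem_map map_linform.
  by rewrite (@eq_linform _ _ _ (fun=> 0)) ?linform0 ?elem_map0 // => j; apply: evZ_lift_coef0.
Qed.

Lemma liftable_elementary W : elementary W -> liftable W.
Proof.
elim=> [|i f H hf _ IH|i l H hl _ IH].
- exists (idmap_poly _ n); split; first exact: tame_id.
    by rewrite spec_id map_pmap_id.
  by move=> c' _; rewrite spec_id.
- exact/liftable_comp/IH/liftable_elem_upper.
- exact/liftable_comp/IH/liftable_elem_linform.
Qed.

End LiftFromSubfield.

Section TransferToSubfield.
Variables (k : fieldType) (L : fieldExtType k) (c : L) (n : nat).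
Local Notation KK := (subvs_of <<1; c>>%AS).
Local Notation proj := (vsproj <<1; c>>%VS).

Lemma proj_adj_pred x : adj_pred c x -> vsval (proj x) = x.
Proof. by move=> h; rewrite vsprojK // adj_pred_subfield. Qed.

Lemma map_proj (p : {mpoly L[n]}) : (forall m, adj_pred c p@_m) ->
  map_mpoly vsval (map_mpoly proj p) = p.
Proof.
move=> h; apply/mpolyP => m.
by rewrite mcoeff_map_mpoly /= mcoeff_map_mpoly_fun ?linear0 // proj_adj_pred.
Qed.

Lemma map_pmap_vsval_inj : injective (@map_pmap KK L vsval n).
Proof.
move=> A B AB; apply: eq_from_tnth => i; apply/mpolyP => m; apply: (fmorph_inj vsval).
by rewrite -!mcoeff_map_mpoly -!tnth_map_pmap AB.
Qed.

Lemma tame_over_adj_pred (H : polymap L n) : tame_over (adj_pred c) H ->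
  exists H' : polymap KK n, tame H' /\ map_pmap vsval H' = H.
Proof.
elim=> {H} [F [A [B [b [AB_adj b_adj AB BA hF]]]]|F [a [a' [f [ha hf hs hF]]]]|
            F G _ [F' [tF <-]] _ [G' [tG <-]]|F G _ [G' [tG eG]] F_adj FG GF].
- pose A' := map_mx proj A; pose B' := map_mx proj B.
  have eA : map_mx vsval A' = A.
    by apply/matrixP => i j; rewrite !mxE proj_adj_pred //; case: (AB_adj i j).
  have eB : map_mx vsval B' = B.
    by apply/matrixP => i j; rewrite !mxE proj_adj_pred //; case: (AB_adj i j).
  exists [tuple \sum_(j < n) (A' i j)%:MP * 'X_j + (proj (b i))%:MP | i < n].
  split.
    apply: tame_affine; exists A', B', (fun i => proj (b i)); split=> //.
    + by apply: (map_mx_inj (f := vsval)); rewrite map_mxM eA eB AB map_mx1.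
    + by apply: (map_mx_inj (f := vsval)); rewrite map_mxM eA eB BA map_mx1.
    + by move=> i; rewrite tnth_mktuple.
  apply: eq_from_tnth => i; rewrite tnth_map_pmap tnth_mktuple hF rmorphD rmorph_sum /=.
  rewrite map_mpolyC /= proj_adj_pred //; congr (_ + _); apply: eq_bigr => j _.
  by rewrite rmorphM /= map_mpolyC map_mpolyX /A' mxE /= proj_adj_pred //; case: (AB_adj i j).
- have aa' i : proj (a i) * proj (a' i) = 1.
    apply: (fmorph_inj vsval); have [sa [sa' e]] := ha i.
    by rewrite rmorph1 rmorphM /= !proj_adj_pred.
  exists [tuple (proj (a i))%:MP * 'X_i + map_mpoly proj (f i) | i < n]; split.
    apply: tame_triangular; exists (fun i => proj (a i)), (fun i => proj (a' i)).
    exists (fun i => map_mpoly proj (f i)); split=> //.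
    + move=> i m; rewrite mcoeff_msupp mcoeff_map_mpoly_fun ?linear0 // => nz.
      by apply: (hs i); rewrite mcoeff_msupp; apply: contraNneq nz => ->; rewrite linear0.
    + by move=> i; rewrite tnth_mktuple.
  apply: eq_from_tnth => i; rewrite tnth_map_pmap tnth_mktuple hF rmorphD rmorphM /=.
  by rewrite map_mpolyC map_mpolyX map_proj //= proj_adj_pred //; have [] := ha i.
- by exists (F' \oP G'); split; [apply: tame_comp | rewrite map_pmap_pcomp].
- have eF : map_pmap vsval (map_pmap proj F) = F.
    by apply: eq_from_tnth => i; rewrite !tnth_map_pmap map_proj.
  exists (map_pmap proj F); split=> //; apply: (tame_inv tG) => //;
    by apply: map_pmap_vsval_inj; rewrite map_pmap_pcomp eF eG ?FG ?GF map_pmap_id.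
Qed.

(* F_c is tame over the field k[c] with trivial linear part, hence elementary,
   and each elementary generator lifts to k[Z] via e. *)
Lemma spec_tame_lift (F : polymap {poly k} n) (e : {poly k}) : evZ c e = 1 ->
  tame_over (adj_pred c) (spec c F) -> affine_part_id F ->
  exists G, [/\ tame G, spec c G = spec c F &
    forall c' : L, evZ c' e = 0 -> spec c' G = idmap_poly L n].
Proof.
move=> ec tF hF; have [H [tH eH]] := tame_over_adj_pred tF.
have /liftable_elementary : elementary H.
  apply: elem_diag_elementary_linear_id; first exact: tame_elem_diag.
  move=> i j; apply: (fmorph_inj vsval).
  rewrite -mcoeff_map_mpoly -tnth_map_pmap eH tnth_mktuple mcoeff_map_mpoly /=.
  by rewrite hF ?mdeg1 // mcoeffXU !rmorph_nat.
by move=> /(_ e ec) [G [tG sG eG]]; exists G; rewrite sG eH.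
Qed.

End TransferToSubfield.

Section FiniteExtension.
Variables (k : finFieldType) (L : fieldExtType k) (n : nat).
Local Notation finL := (FinFieldExtType L).
Local Notation Id := (idmap_poly L n).

Lemma kminPoly_subproof (c : L) :
  exists p : {poly k}, minPoly 1 c == map_poly (in_alg L) p.
Proof. by have /polyOver1P [p ->] := minPolyOver 1 c; exists p. Qed.

Definition kminPoly (c : L) : {poly k} := xchoose (kminPoly_subproof c).

Lemma map_kminPoly c : map_poly (in_alg L) (kminPoly c) = minPoly 1 c.
Proof. exact/esym/eqP/(xchooseP (kminPoly_subproof c)). Qed.

Lemma evZ_kminPoly c : evZ c (kminPoly c) = 0.
Proof. by rewrite /evZ map_kminPoly; apply/eqP/root_minPoly. Qed.

Lemma evZ_conj_root (c c' : L) (q : {poly k}) :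
  evZ c q = 0 -> evZ c' (kminPoly c) = 0 -> evZ c' q = 0.
Proof.
move=> qc qc'; rewrite /evZ.
have /dvdpP [r ->] : minPoly 1 c %| map_poly (in_alg L) q.
  by apply: minPoly_dvdp; [apply/polyOver1P; exists q | exact/eqP].
by move: qc'; rewrite /evZ hornerM -map_kminPoly => ->; rewrite mulr0.
Qed.

Lemma spec_eq_conj (c c' : L) (A B : polymap {poly k} n) :
  spec c A = spec c B -> evZ c' (kminPoly c) = 0 -> spec c' A = spec c' B.
Proof.
move=> AB cc'; apply: eq_from_tnth => i; apply/mpolyP => m.
have /(congr1 (mcoeff m)) := congr1 (fun T => tnth T i) AB.
rewrite !tnth_mktuple !mcoeff_map_mpoly /= => /eqP; rewrite -subr_eq0 -rmorphB => /eqP.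
by move=> /evZ_conj_root /(_ cc') /eqP; rewrite rmorphB subr_eq0 => /eqP.
Qed.

Lemma expf_card_pred (x : L) : x != 0 -> x ^+ #|finL|.-1 = 1.
Proof.
move=> nx; have card_gt0 : (0 < #|finL|)%N by apply/card_gt0P; exists (0 : finL).
have := expf_card (x : finL); rewrite -(prednK card_gt0) exprS => /eqP.
by rewrite -{3}[x]mulr1 (inj_eq (mulfI nx)) => /eqP.
Qed.

Definition indicator (c : L) : {poly k} := 1 - kminPoly c ^+ #|finL|.-1.

Lemma evZ_indicator c : evZ c (indicator c) = 1.
Proof.
have card_gt1 : (1 < #|finL|)%N.
  by apply/card_gt1P; exists (0 : finL), (1 : finL); rewrite eq_sym oner_eq0.
rewrite /indicator rmorphB rmorph1 rmorphXn /= evZ_kminPoly expr0n.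
have -> : (#|finL|.-1 == 0%N) = false by move: card_gt1; case: #|finL| => [|[]].
by rewrite subr0.
Qed.

Lemma evZ_indicator0 (c c' : L) : evZ c' (kminPoly c) != 0 -> evZ c' (indicator c) = 0.
Proof. by move=> h; rewrite /indicator rmorphB rmorph1 rmorphXn /= expf_card_pred // subrr. Qed.

Variable F : polymap {poly k} n.
Hypothesis tame_spec : forall c : L, tame_over (adj_pred c) (spec c F).
Hypothesis linF : affine_part_id F.

Lemma tame_lift_conj_class c : exists G, [/\ tame G, spec c G = spec c F &
  forall c', evZ c' (kminPoly c) != 0 -> spec c' G = Id].
Proof.
have [G [tG sG eG]] := spec_tame_lift (evZ_indicator c) (tame_spec c) linF.
by exists G; split=> // c' h; apply/eG/evZ_indicator0.
Qed.

(* Composing the lifts for the conjugacy classes meeting s on which P holds: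
   the lifts are the identity off their own class, so they do not interfere. *)
Lemma tame_patch_seq (P : pred L) :
  (forall c c', P c -> evZ c' (kminPoly c) = 0 -> P c') ->
  forall s : seq L, exists G, [/\ tame G,
    forall c, spec c G = spec c F \/ spec c G = Id,
    forall c, ~~ P c -> spec c G = Id &
    forall c, c \in s -> P c -> spec c G = spec c F].
Proof.
move=> P_conj; elim=> [|c s [G [tG FG_or PG sG]]].
  exists (idmap_poly _ n); split=> //; first exact: tame_id.
    by move=> c; right; rewrite spec_id.
  by move=> c _; rewrite spec_id.
have [Pc|nPc] := boolP (P c); last first.
  by exists G; split=> // c0; rewrite in_cons => /orP[/eqP->|/sG//]; rewrite (negbTE nPc).
have [Gc|Gc] := FG_or c.
  by exists G; split=> // c0; rewrite in_cons => /orP[/eqP->|/sG].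
have [H [tH sH eH]] := tame_lift_conj_class c.
have Gc' : spec c G = spec c (idmap_poly _ n) by rewrite spec_id.
have conj_class (c' : L) : evZ c' (kminPoly c) = 0 -> spec c' (H \oP G) = spec c' F.
  by move=> z; rewrite spec_pcomp (spec_eq_conj Gc' z) (spec_eq_conj sH z) spec_id pcomp_idr.
have off_class (c' : L) : evZ c' (kminPoly c) != 0 -> spec c' (H \oP G) = spec c' G.
  by move=> nz; rewrite spec_pcomp eH // pcomp_idl.
exists (H \oP G); split; first exact: tame_comp.
- move=> c'; have [/conj_class|/off_class->] := eqVneq (evZ c' (kminPoly c)) 0; by [left|].
- move=> c' nPc'; have [z|/off_class->] := eqVneq (evZ c' (kminPoly c)) 0; last exact: PG.
  by move: nPc'; rewrite (P_conj _ _ Pc z).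
- move=> c0; have [/conj_class//|nz] := eqVneq (evZ c0 (kminPoly c)) 0.
  rewrite off_class // in_cons => /orP[/eqP c0c|/sG//].
  by rewrite c0c evZ_kminPoly eqxx in nz.
Qed.

Lemma tame_patch (P : pred L) :
  (forall c c', P c -> evZ c' (kminPoly c) = 0 -> P c') ->
  exists G, tame G /\ forall c, spec c G = if P c then spec c F else Id.
Proof.
move=> P_conj; have [G [tG _ PG sG]] := tame_patch_seq P_conj (enum finL).
exists G; split=> // c; case: ifP => [Pc|/negbT]; last exact: PG.
by apply: sG; rewrite // (mem_enum finL c).
Qed.

End FiniteExtension.

Theorem mainTheorem8 (k : finFieldType) (n : nat) (g : {poly k})
    (F : polymap {poly k} n) :
  g != 0 ->
  tame_over (loc_pred g) (to_frac_map F) ->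
  is_GA F ->
  affine_part_id F ->
  (forall (L : fieldExtType k) (c : L), tame_over (adj_pred c) (spec c F)) ->
  forall m : nat, (0 < m)%N ->
  forall L : fieldExtType k, \dim {:L} = m ->
  exists G Gt : polymap {poly k} n,
    [/\ tame G, tame Gt &
      forall c : L,
        [/\ evZ c g != 0 -> spec c G = idmap_poly L n,
            evZ c g = 0 -> spec c G = spec c F &
            evZ c g != 0 -> spec c Gt = spec c F]].
Proof.
move=> _ _ _ linF tame_spec m _ L _.
have [G [tG eG]] := tame_patch (tame_spec L) linF (P := fun c => evZ c g == 0)
  (fun c c' gc cc' => introT eqP (evZ_conj_root (eqP gc) cc')).
have [Gt [tGt eGt]] := tame_patch (tame_spec L) linF (P := predT) (fun _ _ _ _ => erefl).
exists G, Gt; split=> // c; rewrite eG eGt.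
by split=> [/negbTE->|->|]; rewrite ?eqxx.
Qed.
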